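(* For all retractable contracts $\rho,\sigma$: if $\rho$ is compliant with $\sigma$, then the judgment $\vartriangleright\rho\dashv\sigma$ (with empty assumption set) is derivable in the formal system for compliance.
   Context: Let $\mathcal N$ be a countable set of names and $\overline{\mathcal N}=\{\bar a\mid a\in\mathcal N\}$ a disjoint set of conames; $\alpha$ ranges over $\mathcal N\cup\overline{\mathcal N}$, with $\bar{\bar a}=a$. Retractable contracts are the closed expressions generated by $\sigma ::= \mathbf 1 \mid \sum_{i\in I} a_i.\sigma_i \ (\text{input}) \mid \sum_{i\in I}\bar a_i.\sigma_i\ (\text{retractable output}) \mid \bigoplus_{i\in I}\bar a_i.\sigma_i\ (\text{unretractable output}) \mid x \mid \mathsf{rec}\,x.\sigma$, where $I$ is non-empty and finite, names/conames in each choice are pairwise distinct, and $\sigma$ is not a variable in $\mathsf{rec}\,x.\sigma$. Choices are commutative; $\mathsf{rec}\,x.\sigma$ is identified with $\sigma[\mathsf{rec}\,x.\sigma/x]$. A unary $\bar a.\sigma$ may be read as either kind of output. Histories are stacks $\vec\gamma ::= [\,] \mid \vec\gamma:\sigma$ with $\sigma$ a retractable contract or the special symbol $\circ$. A contract with history is a pair $\langle\vec\gamma,\sigma\rangle$ with $\sigma$ a contract or $\circ$. Transitions: $\langle\vec\gamma,\alpha.\sigma+\sigma'\rangle\xrightarrow{\alpha}\langle\vec\gamma:\sigma',\sigma\rangle$ (for retractable choices, $+$ being input or retractable output sum); $\langle\vec\gamma,\bar a.\sigma\oplus\sigma'\rangle\xrightarrow{\tau}\langle\vec\gamma,\bar a.\sigma\rangle$;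 $\langle\vec\gamma,\alpha.\sigma\rangle\xrightarrow{\alpha}\langle\vec\gamma:\circ,\sigma\rangle$; $\langle\vec\gamma:\sigma',\sigma\rangle\xrightarrow{\mathsf{rb}}\langle\vec\gamma,\sigma'\rangle$. Client/server pairs $\langle\vec\delta,\rho\rangle\parallel\langle\vec\gamma,\sigma\rangle$ reduce by: (comm) if $\langle\vec\delta,\rho\rangle\xrightarrow{\alpha}\langle\vec\delta',\rho'\rangle$ and $\langle\vec\gamma,\sigma\rangle\xrightarrow{\bar\alpha}\langle\vec\gamma',\sigma'\rangle$ then the pair reduces to $\langle\vec\delta',\rho'\rangle\parallel\langle\vec\gamma',\sigma'\rangle$; ($\tau$) a $\tau$-transition of either component alone; (rbk) if both components do an $\mathsf{rb}$ transition and $\rho\neq\mathbf 1$, both roll back simultaneously; rule (rbk) applies only if neither (comm) nor ($\tau$) applies. Then $\langle\vec\delta,\rho\rangle$ is compliant with $\langle\vec\gamma,\sigma\rangle$ if whenever $\langle\vec\delta,\rho\rangle\parallel\langle\vec\gamma,\sigma\rangle$ reduces in finitely many steps to a pair $\langle\vec\delta',\rho'\rangle\parallel\langle\vec\gamma',\sigma'\rangle$ with no further reduction, we have $\rho'=\mathbf 1$. A contract $\rho$ is compliant with $\sigma$ if $\langle[\,],\rho\rangle$ is compliant with $\langle[\,],\sigma\rangle$. The formal system derives judgments $\Gamma\vartriangleright\rho\dashv\sigma$, $\Gamma$ a set of expressions $\rho'\dashv\sigma'$, as finite trees with rules (applied modulo fold/unfold of recursion): (Ax) $\Gamma\vartriangleright\mathbf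 1\dashv\sigma$; (Hyp) $\Gamma,\rho\dashv\sigma\vartriangleright\rho\dashv\sigma$; $(+,+)$ if $\rho=\sum_{i\in I}\alpha_i.\rho_i$, $\sigma=\sum_{j\in J}\bar\alpha_j.\sigma_j$ are retractable choices and $k\in I\cap J$, from $\Gamma,\rho\dashv\sigma\vartriangleright\rho_k\dashv\sigma_k$ infer $\Gamma\vartriangleright\rho\dashv\sigma$; $(\oplus,+)$ from $\Gamma,\bigoplus_{i\in I}\bar a_i.\rho_i\dashv\sum_{j\in I\cup J}a_j.\sigma_j\vartriangleright\rho_i\dashv\sigma_i$ for all $i\in I$ infer $\Gamma\vartriangleright\bigoplus_{i\in I}\bar a_i.\rho_i\dashv\sum_{j\in I\cup J}a_j.\sigma_j$; $(+,\oplus)$ symmetrically, from $\Gamma,\sum_{j\in I\cup J}a_j.\sigma_j\dashv\bigoplus_{i\in I}\bar a_i.\rho_i\vartriangleright\rho_i\dashv\sigma_i$ for all $i\in I$ infer $\Gamma\vartriangleright\sum_{j\in I\cup J}a_j.\sigma_j\dashv\bigoplus_{i\in I}\bar a_i.\rho_i$. *)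

From Stdlib Require Import List Arith Permutation Relations.
Import ListNotations.

Definition name := nat.

(* Kinds of choices: input sum, retractable output sum, unretractable output
   (internal) choice.  Conames are encoded by the polarity of the choice. *)
Inductive kind : Type := KIn | KROut | KUOut.

Inductive contract : Type :=
| One : contract
| Ch : kind -> list (name * contract) -> contract
| Var : nat -> contract
| Rec : nat -> contract -> contract.

Inductive wf_c : list nat -> contract -> Prop :=
| wf_one B : wf_c B One
| wf_ch B k l : l <> [] -> NoDup (map fst l) ->
    Forall (fun p => wf_c B (snd p)) l -> wf_c B (Ch k l)
| wf_var B x : In x B -> wf_c B (Var x)
| wf_rec B x s : (forall y, s <> Var y) -> wf_c (x :: B) s -> wf_c B (Rec x s).

Definition retractable (s : contract) : Prop := wf_c [] s.

Inductive scoped : list nat -> contract -> Prop :=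
| sc_one B : scoped B One
| sc_ch B k l : Forall (fun p => scoped B (snd p)) l -> scoped B (Ch k l)
| sc_var B x : In x B -> scoped B (Var x)
| sc_rec B x s : scoped (x :: B) s -> scoped B (Rec x s).

(* Substitution of a (closed) contract t for x; stops at rebinding of x. *)
Fixpoint subst (x : nat) (t : contract) (s : contract) : contract :=
  match s with
  | One => One
  | Ch k l => Ch k ((fix go (l : list (name * contract)) :=
                      match l with
                      | [] => []
                      | (a, u) :: l' => (a, subst x t u) :: go l'
                      end) l)
  | Var y => if Nat.eqb y x then t else Var y
  | Rec y b => if Nat.eqb y x then Rec y b else Rec y (subst x t b)
  end.

Inductive unf : contract -> contract -> Prop :=
| unf_refl s : unf s s
| unf_step x s t : unf (subst x (Rec x s) s) t -> unf (Rec x s) t.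

Definition is_one (s : contract) : Prop := unf s One.

Inductive ceq : contract -> contract -> Prop :=
| ceq_refl s : ceq s s
| ceq_sym s t : ceq s t -> ceq t s
| ceq_trans s t u : ceq s t -> ceq t u -> ceq s u
| ceq_unfold x s : scoped [] (Rec x s) -> ceq (Rec x s) (subst x (Rec x s) s)
| ceq_perm k l l' : Permutation l l' -> ceq (Ch k l) (Ch k l')
| ceq_branch k l l' :
    Forall2 (fun p q => fst p = fst q /\ ceq (snd p) (snd q)) l l' ->
    ceq (Ch k l) (Ch k l')
| ceq_rec x s s' : ceq s s' -> ceq (Rec x s) (Rec x s')
| ceq_unary a s : ceq (Ch KROut [(a, s)]) (Ch KUOut [(a, s)]).

Inductive label : Type := LIn (a : name) | LOut (a : name) | LTau | LRb.

Definition lab_of (k : kind) (a : name) : label :=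
  match k with KIn => LIn a | _ => LOut a end.

Definition dual (l : label) : label :=
  match l with LIn a => LOut a | LOut a => LIn a | x => x end.

(* Histories: stacks (head = top) of contracts or the symbol o (None).
   A contract with history: (history, contract-or-o). *)
Definition history := list (option contract).
Definition hstate := (history * option contract)%type.

Definition remove_branch (a : name) (l : list (name * contract)) :=
  filter (fun p => negb (Nat.eqb (fst p) a)) l.

Inductive trans : hstate -> label -> hstate -> Prop :=
| tr_retr h s k l a s' :
    unf s (Ch k l) -> k <> KUOut -> 2 <= length l -> In (a, s') l ->
    trans (h, Some s) (lab_of k a)
          (Some (Ch k (remove_branch a l)) :: h, Some s')
| tr_tau h s l a s' :
    unf s (Ch KUOut l) -> 2 <= length l -> In (a, s') l ->
    trans (h, Some s) LTau (h, Some (Ch KUOut [(a, s')]))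
| tr_unary h s k a s' :
    unf s (Ch k [(a, s')]) ->
    trans (h, Some s) (lab_of k a) (None :: h, Some s')
| tr_rb h s' s : trans (s' :: h, s) LRb (h, s').

Definition pair_state := (hstate * hstate)%type.

Inductive ct_step : pair_state -> pair_state -> Prop :=
| st_comm c c' d d' al :
    al <> LTau -> al <> LRb ->
    trans c al c' -> trans d (dual al) d' -> ct_step (c, d) (c', d')
| st_tau_l c c' d : trans c LTau c' -> ct_step (c, d) (c', d)
| st_tau_r c d d' : trans d LTau d' -> ct_step (c, d) (c, d').

Definition not_one (r : option contract) : Prop :=
  match r with Some s => ~ is_one s | None => True end.

Inductive step : pair_state -> pair_state -> Prop :=
| st_ct P Q : ct_step P Q -> step P Q
| st_rbk c c' d d' :
    trans c LRb c' -> trans d LRb d' -> not_one (snd c) ->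
    (forall Q, ~ ct_step (c, d) Q) ->
    step (c, d) (c', d').

Definition compliant_h (c d : hstate) : Prop :=
  forall c' d', clos_refl_trans _ step (c, d) (c', d') ->
    (forall Q, ~ step (c', d') Q) ->
    exists r, snd c' = Some r /\ is_one r.

Definition compliant (rho sigma : contract) : Prop :=
  compliant_h ([], Some rho) ([], Some sigma).

(* The formal system.  Gamma is a list of assumptions rho |- sigma;
   rule (conv) implements "modulo fold/unfold (and identification)". *)
Inductive derives : list (contract * contract) -> contract -> contract -> Prop :=
| d_conv G r r' s s' :
    ceq r r' -> ceq s s' -> derives G r' s' -> derives G r s
| d_ax G s : derives G One s
| d_hyp G r s : In (r, s) G -> derives G r s
| d_pp G kr ks lr ls a r' s' :
    ((kr = KIn /\ ks = KROut) \/ (kr = KROut /\ ks = KIn)) ->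
    In (a, r') lr -> In (a, s') ls ->
    derives ((Ch kr lr, Ch ks ls) :: G) r' s' ->
    derives G (Ch kr lr) (Ch ks ls)
| d_op G lr ls :
    (forall a r', In (a, r') lr ->
       exists s', In (a, s') ls /\
                  derives ((Ch KUOut lr, Ch KIn ls) :: G) r' s') ->
    derives G (Ch KUOut lr) (Ch KIn ls)
| d_po G ls lr :
    (forall a r', In (a, r') lr ->
       exists s', In (a, s') ls /\
                  derives ((Ch KIn ls, Ch KUOut lr) :: G) s' r') ->
    derives G (Ch KIn ls) (Ch KUOut lr).

From Stdlib Require Import List Arith Relations Lia Classical ClassicalEpsilon Wf_nat.
Import ListNotations.

(* A derivation is read off compliance.  Call a pair of contracts
   noncompliant when the client can be driven into a stuck state without
   having succeeded.  If a pair of choices is not noncompliant, one of the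
   rules (+,+), (⊕,+), (+,⊕) applies with premises that are again not
   noncompliant: were all candidate premises noncompliant, so would be the
   pair, because after a failing branch the pair rolls back to the two
   choices without that branch.  Every contract met this way lies in the
   finite closure of rho or sigma under unfolding and branching, so along
   each branch of the derivation some pair repeats and is closed by (Hyp). *)

(** * Substitution *)

Fixpoint contract_deep_ind (P : contract -> Prop) (H1 : P One)
  (H2 : forall k l, Forall (fun p => P (snd p)) l -> P (Ch k l))
  (H3 : forall x, P (Var x)) (H4 : forall x s, P s -> P (Rec x s))
  (s : contract) : P s :=
  match s with
  | One => H1
  | Ch k l => H2 k l ((fix go (l : list (name * contract)) :=
       match l return Forall (fun p => P (snd p)) l with
       | [] => Forall_nil _
       | p :: l' => Forall_cons p (contract_deep_ind P H1 H2 H3 H4 (snd p)) (go l')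
       end) l)
  | Var x => H3 x
  | Rec x b => H4 x b (contract_deep_ind P H1 H2 H3 H4 b)
  end.

Lemma subst_Ch x t k l :
  subst x t (Ch k l) = Ch k (map (fun p => (fst p, subst x t (snd p))) l).
Proof. simpl. f_equal. induction l as [|[a u] l IH]; simpl; congruence. Qed.

Lemma scoped_incl u : forall B B', incl B B' -> scoped B u -> scoped B' u.
Proof.
  induction u as [| k l IH | x | x u IH] using contract_deep_ind;
    intros B B' HB Hs; inversion Hs; subst; constructor; auto.
  - rewrite Forall_forall in *. intros p Hp. eapply IH; eauto.
  - apply (IH (x :: B)); auto. apply incl_cons; [left; reflexivity | now apply incl_tl].
Qed.

Lemma wf_scoped s : forall B, wf_c B s -> scoped B s.
Proof.
  induction s as [| k l IH | x | x b IH] using contract_deep_ind;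
    intros B H; inversion H; subst; constructor; auto.
  rewrite Forall_forall in *. intros p Hp. apply IH; auto.
Qed.

Definition closed (u : contract) : Prop := scoped [] u.

Lemma subst_notin u : forall B x t, scoped B u -> ~ In x B -> subst x t u = u.
Proof.
  induction u as [| k l IH | y | y u IH] using contract_deep_ind;
    intros B x t Hs Hx; inversion Hs; subst.
  - reflexivity.
  - rewrite subst_Ch. f_equal. rewrite <- (map_id l) at 2.
    apply map_ext_in. intros [a v] Hv. f_equal.
    rewrite Forall_forall in *. eapply (IH (a, v)); eauto.
  - simpl. destruct (Nat.eqb_spec y x); subst; tauto.
  - simpl. destruct (Nat.eqb_spec y x); auto. f_equal.
    apply (IH (y :: B)); auto. intros [->|H']; auto.
Qed.

Definition env := nat -> option contract.
Definition env0 : env := fun _ => None.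
Definition env_del (y : nat) (e : env) : env :=
  fun z => if Nat.eqb z y then None else e z.
Definition env_set (x : nat) (u : contract) (e : env) : env :=
  fun z => if Nat.eqb z x then Some u else e z.

Fixpoint msubst (e : env) (s : contract) : contract :=
  match s with
  | One => One
  | Ch k l => Ch k (map (fun p => (fst p, msubst e (snd p))) l)
  | Var y => match e y with Some u => u | None => Var y end
  | Rec y b => Rec y (msubst (env_del y e) b)
  end.

Lemma msubst_ext s : forall e e', (forall z, e z = e' z) -> msubst e s = msubst e' s.
Proof.
  induction s as [| k l IH | x | x u IH] using contract_deep_ind; intros e e' He; simpl.
  - reflexivity.
  - f_equal. apply map_ext_Forall. eapply Forall_impl; [|exact IH].
    intros [a u] Hu. simpl. f_equal. auto.
  - now rewrite He.
  - f_equal. apply IH. intros z. unfold env_del. now destruct (Nat.eqb z x).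
Qed.

Lemma msubst_id s : forall B e, scoped B s -> (forall z, In z B -> e z = None) ->
  msubst e s = s.
Proof.
  induction s as [| k l IH | x | x b IH] using contract_deep_ind;
    intros B e Hs He; inversion Hs; subst; simpl; auto.
  - f_equal. rewrite <- (map_id l) at 2. apply map_ext_in. intros [a u] Hu. f_equal.
    rewrite Forall_forall in *. eapply (IH (a, u)); eauto.
  - now rewrite He.
  - f_equal. apply (IH (x :: B)); auto. intros z [->|Hz]; unfold env_del.
    + now rewrite Nat.eqb_refl.
    + destruct (Nat.eqb z x); auto.
Qed.

Definition env_closed (e : env) : Prop := forall z u, e z = Some u -> closed u.

Lemma subst_msubst b : forall e x t, closed t -> env_closed e ->
  subst x t (msubst (env_del x e) b) = msubst (env_set x t e) b.
Proof.
  induction b as [| k l IH | y | y b IH] using contract_deep_ind; intros e x t Ht He.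
  - reflexivity.
  - cbn [msubst]. rewrite subst_Ch, map_map. f_equal. apply map_ext_Forall.
    eapply Forall_impl; [|exact IH]. intros [a u] Hu. simpl. f_equal. auto.
  - simpl. unfold env_del, env_set. destruct (Nat.eqb_spec y x); subst.
    + simpl. now rewrite Nat.eqb_refl.
    + destruct (e y) eqn:E.
      * eapply subst_notin; [exact (He _ _ E) | simpl; auto].
      * simpl. destruct (Nat.eqb_spec y x); congruence.
  - simpl. destruct (Nat.eqb_spec y x); subst.
    + f_equal. apply msubst_ext. intros z. unfold env_del, env_set. now destruct (Nat.eqb z x).
    + f_equal. rewrite (msubst_ext _ (env_del y (env_del x e)) (env_del x (env_del y e))).
      2:{ intros z. unfold env_del. now destruct (Nat.eqb z x), (Nat.eqb z y). }
      rewrite IH; auto.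
      * apply msubst_ext. intros z. unfold env_del, env_set.
        destruct (Nat.eqb_spec z x), (Nat.eqb_spec z y); subst; congruence.
      * intros z u. unfold env_del. destruct (Nat.eqb z y); [congruence | apply He].
Qed.

Lemma msubst_scoped v : forall B C e, scoped B v ->
  (forall z, In z B -> match e z with Some u => scoped C u | None => In z C end) ->
  scoped C (msubst e v).
Proof.
  induction v as [| k l IH | x | x v IH] using contract_deep_ind;
    intros B C e Hs He; inversion Hs; subst; simpl.
  - constructor.
  - constructor. rewrite Forall_forall in *. intros [a u] Hp.
    apply in_map_iff in Hp as [[a' u'] [Heq Hin]]. injection Heq as <- <-.
    eapply (IH _ Hin); eauto.
  - specialize (He x ltac:(assumption)). destruct (e x); auto. now constructor.
  - constructor. apply (IH (x :: B)); auto. intros z Hz. unfold env_del.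
    destruct (Nat.eqb_spec z x); subst; simpl; auto.
    destruct Hz as [->|Hz]; [congruence|]. specialize (He z Hz). destruct (e z); auto.
    eapply scoped_incl; [|eauto]. intros w; simpl; auto.
Qed.

Lemma msubst_closed B v e : wf_c B v -> (forall z, In z B -> e z <> None) ->
  env_closed e -> closed (msubst e v).
Proof.
  intros Hw HB Hc. eapply msubst_scoped; [apply wf_scoped; eauto|].
  intros z Hz. specialize (HB z Hz). destruct (e z) eqn:E; [eapply Hc; eauto | congruence].
Qed.

(** * The finite closure of a contract *)

(* The subterms of [s], each paired with the environment sending the
   recursion variables bound above it to their unfoldings; the contracts
   [msubst e v] for [(v, e)] in [positions r env0] form a finite set
   containing [r] and closed under unfolding and branching. *)
Fixpoint positions (s : contract) (e : env) : list (contract * env) :=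
  (s, e) :: match s with
            | Ch k l => (fix go (l : list (name * contract)) :=
                          match l with
                          | [] => []
                          | p :: l' => positions (snd p) e ++ go l'
                          end) l
            | Rec x b => positions b (env_set x (msubst e (Rec x b)) e)
            | _ => []
            end.

Lemma positions_self s e : In (s, e) (positions s e).
Proof. destruct s; simpl; auto. Qed.

Lemma positions_Ch k l e a b : In (a, b) l -> incl (positions b e) (positions (Ch k l) e).
Proof.
  intros H p Hp. simpl. right. induction l as [|q l IH]; simpl in *; [tauto|].
  apply in_or_app. destruct H as [->|H]; auto.
Qed.

Lemma positions_Rec x b e :
  incl (positions b (env_set x (msubst e (Rec x b)) e)) (positions (Rec x b) e).
Proof. intros p Hp. simpl. now right. Qed.

Lemma positions_Ch_inv k l e p : In p (positions (Ch k l) e) ->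
  p = (Ch k l, e) \/ exists a b, In (a, b) l /\ In p (positions b e).
Proof.
  simpl. intros [H|H]; auto. right. induction l as [|[a u] l IHl]; simpl in H; [tauto|].
  apply in_app_or in H as [H|H].
  - exists a, u. simpl; auto.
  - destruct (IHl H) as [a' [b' [H1 H2]]]. exists a', b'. simpl; auto.
Qed.

Lemma positions_trans s : forall e v e',
  In (v, e') (positions s e) -> incl (positions v e') (positions s e).
Proof.
  induction s as [| k l IH | x | x b IH] using contract_deep_ind; intros e v e' H.
  - destruct H as [H|[]]. injection H as -> ->. apply incl_refl.
  - apply positions_Ch_inv in H as [H|[a [b [Hab H]]]].
    + injection H as -> ->. apply incl_refl.
    + rewrite Forall_forall in IH. eapply incl_tran; [exact (IH (a, b) Hab _ _ _ H)|].
      eapply positions_Ch; eauto.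
  - destruct H as [H|[]]. injection H as -> ->. apply incl_refl.
  - destruct H as [H|H].
    + injection H as -> ->. apply incl_refl.
    + eapply incl_tran; [eapply IH, H | apply positions_Rec].
Qed.

Definition head_normal (h : contract) : Prop := h = One \/ exists k l, h = Ch k l.

Section Closure.

Variable r0 : contract.
Hypothesis wf_r0 : retractable r0.

Definition env_unfoldings (e : env) : Prop :=
  forall z u, e z = Some u -> closed u /\
    exists x w e', In (Rec x w, e') (positions r0 env0) /\ u = msubst e' (Rec x w).

Definition position_ok (v : contract) (e : env) : Prop :=
  (exists B, wf_c B v /\ forall z, In z B -> e z <> None) /\ env_unfoldings e.

Lemma position_ok_closed v e : position_ok v e -> closed (msubst e v).
Proof.
  intros [[B [Hw HB]] He]. eapply msubst_closed; eauto. intros z u Hz. now apply (He z u).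
Qed.

Lemma positions_ok s : forall e, In (s, e) (positions r0 env0) -> position_ok s e ->
  forall v e', In (v, e') (positions s e) -> position_ok v e'.
Proof.
  induction s as [| k l IH | x | x b IH] using contract_deep_ind; intros e Hin Hok v e' Hp.
  - destruct Hp as [Hp|[]]. now injection Hp as <- <-.
  - apply positions_Ch_inv in Hp as [Hp|[a [b [Hab Hp]]]]; [now injection Hp as -> ->|].
    destruct Hok as [[B [Hw HB]] He]. inversion Hw; subst.
    rewrite Forall_forall in *. eapply (IH (a, b) Hab e); [| |exact Hp].
    + eapply positions_trans; [exact Hin|]. eapply positions_Ch; [exact Hab|]. apply positions_self.
    + split; auto. exists B. split; auto.
  - destruct Hp as [Hp|[]]. now injection Hp as <- <-.
  - destruct Hp as [Hp|Hp]; [now injection Hp as <- <-|].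
    eapply IH; [| |exact Hp].
    { eapply positions_trans; [exact Hin|]. apply positions_Rec. apply positions_self. }
    pose proof (position_ok_closed _ _ Hok) as Hc.
    destruct Hok as [[B [Hw HB]] He]. inversion Hw; subst. split.
    + exists (x :: B). split; auto. intros z Hz. unfold env_set.
      destruct (Nat.eqb_spec z x); [congruence|].
      destruct Hz as [->|Hz]; [congruence | auto].
    + intros z u. unfold env_set. destruct (Nat.eqb_spec z x); [|apply He].
      intros Hu. injection Hu as <-. split; eauto.
Qed.

Lemma positions_r0_ok v e : In (v, e) (positions r0 env0) -> position_ok v e.
Proof.
  apply positions_ok; [apply positions_self|]. split.
  - exists []. split; [exact wf_r0 | intros _ []].
  - unfold env0. congruence.
Qed.

Definition in_closure (u : contract) : Prop :=
  exists v e, In (v, e) (positions r0 env0) /\ u = msubst e v.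

Lemma closure_self : in_closure r0.
Proof.
  exists r0, env0. split; [apply positions_self|].
  symmetry. eapply msubst_id; [apply wf_scoped, wf_r0 | intros _ []].
Qed.

Lemma closure_closed u : in_closure u -> closed u.
Proof. intros [v [e [Hin ->]]]. now apply position_ok_closed, positions_r0_ok. Qed.

Lemma closure_Rec x c : in_closure (Rec x c) ->
  exists b e, In (Rec x b, e) (positions r0 env0) /\ c = msubst (env_del x e) b.
Proof.
  intros [v [e [Hin Hu]]]. destruct v; simpl in Hu; try discriminate.
  - destruct (positions_r0_ok _ _ Hin) as [_ He]. destruct (e n) eqn:E; [|discriminate].
    destruct (He _ _ E) as [_ [x' [w [e' [Hin' ->]]]]]. injection Hu as -> ->. eauto.
  - injection Hu as -> ->. eauto.
Qed.

Lemma closure_unfold x c : in_closure (Rec x c) -> in_closure (subst x (Rec x c) c).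
Proof.
  intros HF. pose proof (closure_closed _ HF) as Hc.
  destruct (closure_Rec _ _ HF) as [b [e [Hin ->]]].
  destruct (positions_r0_ok _ _ Hin) as [_ He].
  rewrite subst_msubst; auto; [|intros z u Hz; now apply (He z u)].
  eexists b, _. split; [|reflexivity].
  eapply positions_trans; [exact Hin|]. apply positions_Rec. apply positions_self.
Qed.

Lemma closure_branch k l a c : in_closure (Ch k l) -> In (a, c) l -> in_closure c.
Proof.
  intros [v [e [Hin Hu]]] Hal. destruct v; simpl in Hu; try discriminate.
  - injection Hu as <- ->. apply in_map_iff in Hal as [[a' u'] [Heq Hin']].
    injection Heq as <- <-. exists u', e. split; auto.
    eapply positions_trans; [exact Hin|]. eapply positions_Ch; [exact Hin'|]. apply positions_self.
  - destruct (positions_r0_ok _ _ Hin) as [_ He]. destruct (e n) eqn:E; [|discriminate].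
    destruct (He _ _ E) as [_ [x' [w [e' [_ ->]]]]]. discriminate.
Qed.

Lemma positions_head_normal v : forall e, (forall y, v <> Var y) ->
  In (v, e) (positions r0 env0) -> exists h, unf (msubst e v) h /\ head_normal h.
Proof.
  induction v as [| k l _ | y | x v IH] using contract_deep_ind; intros e Hv Hin.
  - exists One. split; [constructor | now left].
  - eexists. split; [constructor | right; simpl; eauto].
  - now destruct (Hv y).
  - pose proof (positions_r0_ok _ _ Hin) as Hok.
    pose proof (position_ok_closed _ _ Hok) as Hc.
    destruct Hok as [[B [Hw _]] He]. inversion Hw; subst.
    destruct (IH (env_set x (msubst e (Rec x v)) e)) as [h [Hu Hh]]; auto.
    { eapply positions_trans; [exact Hin|]. apply positions_Rec. apply positions_self. }
    exists h. split; auto. constructor. simpl in Hc |- *.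
    rewrite subst_msubst; auto. intros z u Hz. now apply (He z u).
Qed.

Lemma closure_head_normal u : in_closure u -> exists h, unf u h /\ head_normal h.
Proof.
  intros [v [e [Hin ->]]]. destruct v as [| | y |];
    try (apply positions_head_normal; [congruence | exact Hin]).
  destruct (positions_r0_ok _ _ Hin) as [[B [Hw HB]] He]. simpl.
  destruct (e y) eqn:E.
  - destruct (He _ _ E) as [_ [x' [w [e' [Hin' ->]]]]].
    apply positions_head_normal; [congruence | exact Hin'].
  - inversion Hw; subst. now destruct (HB y).
Qed.

Lemma closure_unf u w : unf u w -> in_closure u -> ceq u w /\ in_closure w.
Proof.
  induction 1 as [s|x s t Hu IH]; intros HF.
  - split; [constructor | exact HF].
  - destruct (IH (closure_unfold _ _ HF)) as [Hc Hw]. split; auto.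
    eapply ceq_trans; [|exact Hc]. now apply ceq_unfold, closure_closed.
Qed.

End Closure.

(** * Non-compliance *)

Definition stuck (P : pair_state) : Prop := forall Q, ~ step P Q.

Definition client_done (c : hstate) : Prop := exists r, snd c = Some r /\ is_one r.

Definition noncompliant (P : pair_state) : Prop :=
  exists c' d', clos_refl_trans _ step P (c', d') /\ stuck (c', d') /\ ~ client_done c'.

Definition noncompliant_ct (r s : contract) : Prop :=
  noncompliant (([], Some r), ([], Some s)).

Lemma compliant_h_noncompliant c d : compliant_h c d -> ~ noncompliant (c, d).
Proof.
  intros H [c' [d' [Hr [Hs Hd]]]]. apply Hd.
  destruct (H c' d' Hr Hs) as [r Hr']. now exists r.
Qed.

Lemma noncompliant_rt P Q : clos_refl_trans _ step P Q -> noncompliant Q -> noncompliant P.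
Proof.
  intros H [c' [d' [Hr Hs]]]. exists c', d'. split; [eapply rt_trans; eauto | exact Hs].
Qed.

Lemma noncompliant_step P Q : step P Q -> noncompliant Q -> noncompliant P.
Proof. intros H. now apply noncompliant_rt, rt_step. Qed.

Lemma noncompliant_stuck c d : stuck (c, d) -> ~ client_done c -> noncompliant (c, d).
Proof. intros. exists c, d. split; [apply rt_refl | auto]. Qed.

Lemma not_done_not_one c : ~ client_done c -> not_one (snd c).
Proof. destruct c as [h [r|]]; simpl; auto. intros H Hr. apply H. now exists r. Qed.

Lemma trans_app_history c l c' b :
  trans c l c' -> trans (fst c ++ b, snd c) l (fst c' ++ b, snd c').
Proof. intros H. destruct H; simpl; econstructor; eauto. Qed.

Lemma trans_other_history c l c' h : trans c l c' -> l <> LRb ->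
  exists c'', trans (h, snd c) l c''.
Proof.
  intros H Hl. destruct H; simpl; try congruence; eexists;
    [eapply tr_retr | eapply tr_tau | eapply tr_unary]; eauto.
Qed.

Lemma trans_history_length c l c' : trans c l c' ->
  (l = LTau /\ fst c' = fst c) \/
  (l = LRb /\ length (fst c) = S (length (fst c'))) \/
  (l <> LTau /\ l <> LRb /\ length (fst c') = S (length (fst c))).
Proof.
  intros H. destruct H; simpl; auto.
  all: right; right; destruct k; simpl; repeat split; congruence.
Qed.

Definition app_histories (b1 b2 : history) (P : pair_state) : pair_state :=
  ((fst (fst P) ++ b1, snd (fst P)), (fst (snd P) ++ b2, snd (snd P))).

Lemma ct_step_app_histories b1 b2 P Q :
  ct_step P Q -> ct_step (app_histories b1 b2 P) (app_histories b1 b2 Q).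
Proof.
  intros H. destruct H; unfold app_histories; simpl.
  - eapply st_comm; eauto; apply trans_app_history; auto.
  - apply st_tau_l. apply (trans_app_history c _ c'); auto.
  - apply st_tau_r. apply (trans_app_history d _ d'); auto.
Qed.

Lemma ct_step_other_histories h1 x h2 y h1' h2' Q :
  ct_step ((h1, x), (h2, y)) Q -> exists Q', ct_step ((h1', x), (h2', y)) Q'.
Proof.
  intros H. inversion H as [c c' d d' al Hal1 Hal2 Hc Hd | c c' d Hc | c d d' Hd]; subst.
  - destruct (trans_other_history _ _ _ h1' Hc Hal2) as [c1 Hc1].
    assert (Hrb : dual al <> LRb) by (destruct al; simpl; congruence).
    destruct (trans_other_history _ _ _ h2' Hd Hrb) as [d1 Hd1].
    eexists. eapply st_comm; eauto.
  - destruct (trans_other_history _ _ _ h1' Hc) as [c1 Hc1]; [congruence|].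
    eexists. apply st_tau_l; eauto.
  - destruct (trans_other_history _ _ _ h2' Hd) as [d1 Hd1]; [congruence|].
    eexists. apply st_tau_r; eauto.
Qed.

Lemma step_app_histories b1 b2 P Q :
  step P Q -> step (app_histories b1 b2 P) (app_histories b1 b2 Q).
Proof.
  intros H. destruct H as [P Q H | c c' d d' Hc Hd Hone Hnct].
  - now apply st_ct, ct_step_app_histories.
  - unfold app_histories; simpl. apply st_rbk; auto.
    + apply (trans_app_history c _ c'); auto.
    + apply (trans_app_history d _ d'); auto.
    + intros Q HQ. destruct c as [h1 x], d as [h2 y].
      destruct (ct_step_other_histories _ _ _ _ h1 h2 _ HQ) as [Q' HQ']. eapply Hnct; eauto.
Qed.

Lemma rt_step_app_histories b1 b2 P Q : clos_refl_trans _ step P Q ->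
  clos_refl_trans _ step (app_histories b1 b2 P) (app_histories b1 b2 Q).
Proof.
  induction 1.
  - now apply rt_step, step_app_histories.
  - apply rt_refl.
  - eapply rt_trans; eauto.
Qed.

Definition same_depth (P : pair_state) : Prop :=
  length (fst (fst P)) = length (fst (snd P)).

Lemma step_same_depth P Q : step P Q -> same_depth P -> same_depth Q.
Proof.
  unfold same_depth. intros H. destruct H as [P Q H | c c' d d' H1 H2 _ _]; simpl.
  - destruct H as [c c' d d' al Ha Hb H1 H2 | c c' d H1 | c d d' H1]; simpl.
    + destruct (trans_history_length _ _ _ H1) as [[? ?]|[[? ?]|[? [? E1]]]];
        try congruence;
      destruct (trans_history_length _ _ _ H2) as [[? ?]|[[? ?]|[? [? E2]]]];
        try (destruct al; simpl in *; congruence); lia.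
    + destruct (trans_history_length _ _ _ H1) as [[? ->]|[[? ?]|[? [? ?]]]]; congruence.
    + destruct (trans_history_length _ _ _ H1) as [[? ->]|[[? ?]|[? [? ?]]]]; congruence.
  - destruct (trans_history_length _ _ _ H1) as [[? ?]|[[? E1]|[? [? ?]]]]; try congruence;
    destruct (trans_history_length _ _ _ H2) as [[? ?]|[[? E2]|[? [? ?]]]]; try congruence; lia.
Qed.

Lemma rt_same_depth P Q : clos_refl_trans _ step P Q -> same_depth P -> same_depth Q.
Proof. induction 1; auto. now apply step_same_depth. Qed.

(* The continuations fail in a state with empty histories, since otherwise
   (rbk) would apply.  Below the histories [[a1]], [[a2]] that state is no
   longer stuck: (rbk) restores [a1] and [a2], which fail again. *)
Lemma noncompliant_rollback P0 a1 a2 x y :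
  clos_refl_trans _ step P0 (([a1], x), ([a2], y)) ->
  noncompliant (([], x), ([], y)) -> noncompliant (([], a1), ([], a2)) ->
  noncompliant P0.
Proof.
  intros H0 [[h1 x'] [[h2 y'] [Hr [Hs Hd]]]] Ha. eapply noncompliant_rt; [exact H0|].
  pose proof (rt_same_depth _ _ Hr eq_refl) as El. unfold same_depth in El; simpl in El.
  destruct h1 as [|z1 h1], h2 as [|z2 h2]; try discriminate.
  - eapply noncompliant_rt; [exact (rt_step_app_histories [a1] [a2] _ _ Hr)|].
    eapply noncompliant_step; [|exact Ha]. unfold app_histories; simpl.
    apply st_rbk; try constructor; [now apply not_done_not_one in Hd|].
    intros Q HQ. destruct (ct_step_other_histories _ _ _ _ [] [] _ HQ) as [Q' HQ'].
    eapply Hs, st_ct, HQ'.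
  - exfalso. eapply Hs. apply st_rbk; try constructor; [now apply not_done_not_one in Hd|].
    intros Q HQ. eapply Hs, st_ct, HQ.
Qed.

Lemma unf_Ch k l X : unf (Ch k l) X -> X = Ch k l.
Proof. now inversion 1. Qed.

Lemma unf_comparable s X Y : unf s X -> unf s Y -> unf X Y \/ unf Y X.
Proof.
  intros H. revert Y. induction H as [s|x s t Hu IH]; intros Y HY; [now left|].
  inversion HY; subst; [right; now constructor | now apply IH].
Qed.

Lemma unf_Ch_inj s k l k' l' : unf s (Ch k l) -> unf s (Ch k' l') -> k = k' /\ l = l'.
Proof.
  intros H1 H2. destruct (unf_comparable _ _ _ H1 H2) as [H|H];
    apply unf_Ch in H; now injection H as -> ->.
Qed.

Lemma unf_Ch_not_one s k l : unf s (Ch k l) -> ~ is_one s.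
Proof.
  intros H1 H2. destruct (unf_comparable _ _ _ H1 H2) as [H|H]; [apply unf_Ch in H|];
    inversion H.
Qed.

Lemma trans_o h l c : trans (h, None) l c -> l = LRb.
Proof. now inversion 1. Qed.

Lemma trans_one h t l c : unf t One -> trans (h, Some t) l c -> l = LRb.
Proof.
  intros Hu Ht. inversion Ht; subst; auto;
  match goal with H : unf t (Ch _ _) |- _ => destruct (unf_comparable _ _ _ Hu H) as [X|X] end;
  inversion X.
Qed.

Lemma trans_nil_not_rb x c : ~ trans ([], x) LRb c.
Proof.
  intros H. remember LRb as l. remember ([], x) as c0.
  destruct H; try discriminate; destruct k; discriminate.
Qed.

Lemma trans_tau_inv h x c : trans (h, x) LTau c -> fst c = h /\
  exists s l a s', x = Some s /\ unf s (Ch KUOut l) /\ 2 <= length l /\ In (a, s') l /\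
    snd c = Some (Ch KUOut [(a, s')]).
Proof.
  intros H. inversion H; subst; simpl; try (destruct k; simpl in *; congruence).
  split; auto. do 4 eexists; eauto.
Qed.

Lemma trans_visible_inv h s al c : trans (h, Some s) al c -> al <> LTau -> al <> LRb ->
  exists k l a s', unf s (Ch k l) /\ In (a, s') l /\ al = lab_of k a /\ snd c = Some s'.
Proof.
  intros H H1 H2. inversion H; subst; try congruence.
  - do 4 eexists; eauto.
  - do 4 eexists; split; eauto. simpl; auto.
Qed.

Lemma dual_lab_of_inj kr ks a b :
  lab_of kr a = dual (lab_of ks b) -> a = b.
Proof. destruct kr, ks; simpl; congruence. Qed.

Lemma trans_branch s k l a r' : unf s (Ch k l) -> k <> KUOut -> In (a, r') l ->
  exists a1, trans ([], Some s) (lab_of k a) ([a1], Some r') /\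
    (a1 = None \/ a1 = Some (Ch k (remove_branch a l))).
Proof.
  intros Hu Hk Hin. destruct (le_lt_dec 2 (length l)).
  - eexists. split; [eapply tr_retr; eauto | right; eauto].
  - destruct l as [|p [|q rest]]; simpl in *; [contradiction | | lia].
    destruct Hin as [-> | []]. eexists. split; [eapply tr_unary; eauto | left; eauto].
Qed.

(** * Non-compliance of stuck configurations *)

(* A tau move yields a unary output, which has no tau move: one step suffices. *)
Definition tau_reach (x x1 : option contract) : Prop :=
  x1 = x \/ trans ([], x) LTau ([], x1).

Definition no_comm (x y : option contract) : Prop :=
  forall al c d, al <> LTau -> al <> LRb ->
    trans ([], x) al c -> trans ([], y) (dual al) d -> False.

Lemma tau_reach_stable x : exists x1, tau_reach x x1 /\ forall c, ~ trans ([], x1) LTau c.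
Proof.
  destruct (classic (exists x1, trans ([], x) LTau ([], x1))) as [[x1 Hx1]|Hn].
  - exists x1. split; [now right|]. intros c Hc.
    apply trans_tau_inv in Hx1 as [_ [s [l [a [s' [_ [_ [_ [_ E]]]]]]]]]. simpl in E; subst.
    apply trans_tau_inv in Hc as [_ [s0 [l' [_ [_ [E [Hu [Hl _]]]]]]]].
    injection E as <-. apply unf_Ch in Hu. injection Hu as ->. simpl in Hl. lia.
  - exists x. split; [now left|]. intros [h x1] Hc. apply Hn.
    destruct (trans_tau_inv _ _ _ Hc) as [E _]. simpl in E; subst. eauto.
Qed.

Lemma noncompliant_of_no_comm x y :
  (forall x1 y1, tau_reach x x1 -> tau_reach y y1 -> no_comm x1 y1) ->
  (forall x1, tau_reach x x1 -> ~ client_done ([], x1)) ->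
  noncompliant (([], x), ([], y)).
Proof.
  intros Hc Hd. destruct (tau_reach_stable x) as [x1 [Hx1 Hnx]].
  destruct (tau_reach_stable y) as [y1 [Hy1 Hny]].
  apply (noncompliant_rt _ (([], x1), ([], y))).
  { destruct Hx1 as [->|Hx1]; [apply rt_refl | now apply rt_step, st_ct, st_tau_l]. }
  apply (noncompliant_rt _ (([], x1), ([], y1))).
  { destruct Hy1 as [->|Hy1]; [apply rt_refl | now apply rt_step, st_ct, st_tau_r]. }
  apply noncompliant_stuck; [|auto]. intros Q HQ. inversion HQ as [P' Q' H | ]; subst.
  - inversion H; subst; [eapply Hc | eapply Hnx | eapply Hny]; eauto.
  - eapply trans_nil_not_rb; eauto.
Qed.

Definition tau_free (k : kind) (l : list (name * contract)) : Prop :=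
  k <> KUOut \/ length l < 2.

Lemma tau_free_unary k p : tau_free k [p].
Proof. right. auto. Qed.

Lemma tau_reach_tau_free s k l x1 :
  unf s (Ch k l) -> tau_free k l -> tau_reach (Some s) x1 -> x1 = Some s.
Proof.
  intros Hu Hk [->|Ht]; auto.
  apply trans_tau_inv in Ht as [_ [s0 [l' [a [s' [E [Hu' [Hl _]]]]]]]]. injection E as <-.
  destruct (unf_Ch_inj _ _ _ _ _ Hu Hu') as [-> ->]. destruct Hk; [congruence | lia].
Qed.

Lemma tau_reach_label s k l x1 al c : unf s (Ch k l) -> tau_reach (Some s) x1 ->
  trans ([], x1) al c -> al <> LTau -> al <> LRb -> exists a, al = lab_of k a.
Proof.
  intros Hu [->|Ht] Htr H1 H2.
  - destruct (trans_visible_inv _ _ _ _ Htr H1 H2) as [k' [l' [a [s' [Hu' [_ [-> _]]]]]]].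
    destruct (unf_Ch_inj _ _ _ _ _ Hu Hu') as [-> ->]. eauto.
  - apply trans_tau_inv in Ht as [_ [s0 [l' [a [s' [E [Hu' [_ [_ E2]]]]]]]]].
    injection E as <-. simpl in E2; subst.
    destruct (unf_Ch_inj _ _ _ _ _ Hu Hu') as [-> ->].
    destruct (trans_visible_inv _ _ _ _ Htr H1 H2) as [k' [l'' [b [s'' [Hu'' [_ [-> _]]]]]]].
    apply unf_Ch in Hu''. injection Hu'' as <-. eauto.
Qed.

Lemma tau_reach_not_done s k l x1 :
  unf s (Ch k l) -> tau_reach (Some s) x1 -> ~ client_done ([], x1).
Proof.
  intros Hu [->|Ht] [r [E Hr]]; simpl in E.
  - injection E as <-. eapply unf_Ch_not_one; eauto.
  - apply trans_tau_inv in Ht as [_ [s0 [_ [a [s' [_ [_ [_ [_ E2]]]]]]]]]. simpl in E2; subst.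
    injection E as <-. eapply unf_Ch_not_one; [constructor | eauto].
Qed.

Lemma noncompliant_client_o y : noncompliant (([], None), ([], y)).
Proof.
  apply noncompliant_of_no_comm.
  - intros x1 y1 [->|Hx] _ al c d H1 H2 Ht _.
    + apply trans_o in Ht. congruence.
    + apply trans_tau_inv in Hx as [_ [s [_ [_ [_ [E _]]]]]]. discriminate.
  - intros x1 [->|Hx] [r [E _]]; simpl in E; [discriminate|].
    apply trans_tau_inv in Hx as [_ [s [_ [_ [_ [E' _]]]]]]. discriminate.
Qed.

Lemma noncompliant_server_o s k l : unf s (Ch k l) -> noncompliant (([], Some s), ([], None)).
Proof.
  intros Hu. apply noncompliant_of_no_comm; [|intros x1; eapply tau_reach_not_done, Hu].
  intros x1 y1 _ [->|Hy] al c d H1 H2 _ Hd.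
  - apply trans_o in Hd. destruct al; simpl in *; congruence.
  - apply trans_tau_inv in Hy as [_ [s0 [_ [_ [_ [E _]]]]]]. discriminate.
Qed.

Lemma noncompliant_server_one s t k l : unf s (Ch k l) -> unf t One -> noncompliant_ct s t.
Proof.
  intros Hs Ht. apply noncompliant_of_no_comm; [|intros x1; eapply tau_reach_not_done, Hs].
  intros x1 y1 _ [->|Hy] al c d H1 H2 _ Hd.
  - apply (trans_one _ _ _ _ Ht) in Hd. destruct al; simpl in *; congruence.
  - apply trans_tau_inv in Hy as [_ [s0 [l' [_ [_ [E [Hu' _]]]]]]]. injection E as <-.
    destruct (unf_comparable _ _ _ Ht Hu') as [X|X]; inversion X.
Qed.

Lemma noncompliant_same_polarity s t kr lr ks ls :
  unf s (Ch kr lr) -> unf t (Ch ks ls) -> (kr = KIn <-> ks = KIn) -> noncompliant_ct s t.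
Proof.
  intros Hs Ht Hk. apply noncompliant_of_no_comm; [|intros x1; eapply tau_reach_not_done, Hs].
  intros x1 y1 Hx Hy al c d H1 H2 Hc Hd.
  destruct (tau_reach_label _ _ _ _ _ _ Hs Hx Hc H1 H2) as [a ->].
  assert (dual (lab_of kr a) <> LTau /\ dual (lab_of kr a) <> LRb) as [H3 H4]
    by (destruct kr; simpl; split; congruence).
  destruct (tau_reach_label _ _ _ _ _ _ Ht Hy Hd H3 H4) as [b Eb].
  destruct kr, ks; simpl in Eb; try discriminate; intuition discriminate.
Qed.

Lemma noncompliant_no_common_name s t kr lr ks ls :
  unf s (Ch kr lr) -> unf t (Ch ks ls) -> tau_free kr lr -> tau_free ks ls ->
  (forall a r' s', In (a, r') lr -> In (a, s') ls -> False) -> noncompliant_ct s t.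
Proof.
  intros Hs Ht Hfr Hfs Hno.
  apply noncompliant_of_no_comm; [|intros x1; eapply tau_reach_not_done, Hs].
  intros x1 y1 Hx Hy al c d H1 H2 Hc Hd.
  rewrite (tau_reach_tau_free _ _ _ _ Hs Hfr Hx) in Hc.
  rewrite (tau_reach_tau_free _ _ _ _ Ht Hfs Hy) in Hd.
  destruct (trans_visible_inv _ _ _ _ Hc H1 H2) as [k1 [l1 [a [r1 [Hu1 [Hi1 [-> _]]]]]]].
  destruct (unf_Ch_inj _ _ _ _ _ Hs Hu1) as [<- <-].
  assert (dual (lab_of kr a) <> LTau /\ dual (lab_of kr a) <> LRb) as [H3 H4]
    by (destruct kr; simpl; split; congruence).
  destruct (trans_visible_inv _ _ _ _ Hd H3 H4) as [k2 [l2 [b [s2 [Hu2 [Hi2 [E _]]]]]]].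
  destruct (unf_Ch_inj _ _ _ _ _ Ht Hu2) as [<- <-].
  assert (a = b) as <-.
  { apply (dual_lab_of_inj kr ks). rewrite <- E. destruct kr; reflexivity. }
  eauto.
Qed.

Definition opposite_retractable (kr ks : kind) : Prop :=
  (kr = KIn /\ ks = KROut) \/ (kr = KROut /\ ks = KIn).

Lemma opposite_retractable_not_KUOut kr ks :
  opposite_retractable kr ks -> kr <> KUOut /\ ks <> KUOut.
Proof. intros [[-> ->]|[-> ->]]; split; discriminate. Qed.

Lemma opposite_retractable_dual kr ks a :
  opposite_retractable kr ks -> lab_of ks a = dual (lab_of kr a).
Proof. now intros [[-> ->]|[-> ->]]. Qed.

Lemma remove_branch_length a r l : In (a, r) l -> length (remove_branch a l) < length l.
Proof.
  intros H.
  pose proof (filter_length_le (fun p : name * contract => negb (Nat.eqb (fst p) a)) l) as Hle.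
  apply Nat.lt_eq_cases in Hle as [Hlt|E]; [exact Hlt|].
  apply filter_length_forallb in E. rewrite forallb_forall in E.
  specialize (E _ H). simpl in E. now rewrite Nat.eqb_refl in E.
Qed.

Lemma in_remove_branch a l p : In p (remove_branch a l) -> In p l.
Proof. now intros [H _]%filter_In. Qed.

(* After a common branch fails, (rbk) rolls the pair back to the two choices
   without that branch. *)
Lemma noncompliant_retractable n : forall lr ls s t kr ks, length lr <= n ->
  opposite_retractable kr ks -> unf s (Ch kr lr) -> unf t (Ch ks ls) ->
  (forall a r' s', In (a, r') lr -> In (a, s') ls -> noncompliant_ct r' s') ->
  noncompliant_ct s t.
Proof.
  induction n as [|n IH]; intros lr ls s t kr ks Hn Hk Hs Ht Hall;
    destruct (opposite_retractable_not_KUOut _ _ Hk) as [Hkr Hks].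
  all: destruct (classic (exists a r' s', In (a, r') lr /\ In (a, s') ls))
    as [[a [r' [s' [Hr Hs']]]]|Hno];
    [| eapply noncompliant_no_common_name; eauto; [left; exact Hkr | left; exact Hks |];
       intros b r1 s1 H1 H2; apply Hno; eauto].
  { destruct lr; [contradiction | simpl in Hn; lia]. }
  destruct (trans_branch _ _ _ _ _ Hs Hkr Hr) as [a1 [Hc Ha1]].
  destruct (trans_branch _ _ _ _ _ Ht Hks Hs') as [a2 [Hd Ha2]].
  eapply noncompliant_rollback.
  - apply rt_step, st_ct. eapply st_comm; [| | exact Hc |].
    1-2: destruct kr; discriminate.
    rewrite <- (opposite_retractable_dual _ _ _ Hk). exact Hd.
  - now apply (Hall a).
  - destruct Ha1 as [-> | ->]; [apply noncompliant_client_o|].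
    destruct Ha2 as [-> | ->]; [eapply noncompliant_server_o, unf_refl|].
    apply (IH (remove_branch a lr) (remove_branch a ls) _ _ kr ks);
      [| exact Hk | apply unf_refl | apply unf_refl |].
    + pose proof (remove_branch_length _ _ _ Hr). unfold name in *. lia.
    + intros b r1 s1 H1 H2. apply in_remove_branch in H1, H2. eauto.
Qed.

Lemma noncompliant_unary_internal_client z t a r' ls :
  unf z (Ch KUOut [(a, r')]) -> unf t (Ch KIn ls) ->
  (forall s', In (a, s') ls -> noncompliant_ct r' s') -> noncompliant_ct z t.
Proof.
  intros Hz Ht Hall. destruct (classic (exists s', In (a, s') ls)) as [[s' Hs']|Hno].
  - destruct (trans_branch _ _ _ _ _ Ht ltac:(discriminate) Hs') as [a2 [Hd _]].
    eapply noncompliant_rollback; [| | apply noncompliant_client_o].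
    + apply rt_step, st_ct. eapply st_comm; [| | eapply tr_unary, Hz | exact Hd]; discriminate.
    + now apply Hall.
  - eapply noncompliant_no_common_name; eauto using tau_free_unary; [left; discriminate|].
    intros b r1 s1 [E|[]] Hb. injection E as <- <-. eauto.
Qed.

Lemma noncompliant_internal_client s t lr ls a r' :
  unf s (Ch KUOut lr) -> In (a, r') lr -> unf t (Ch KIn ls) ->
  (forall s', In (a, s') ls -> noncompliant_ct r' s') -> noncompliant_ct s t.
Proof.
  intros Hs Hin Ht Hall. destruct (le_lt_dec 2 (length lr)).
  - eapply noncompliant_step; [apply st_ct, st_tau_l; eapply tr_tau; eauto|].
    eapply noncompliant_unary_internal_client; eauto. constructor.
  - destruct lr as [|p [|q rest]]; simpl in *; [contradiction | | lia].
    destruct Hin as [-> | []]. eapply noncompliant_unary_internal_client; eauto.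
Qed.

Lemma noncompliant_unary_internal_server s t a s' lr :
  unf t (Ch KUOut [(a, s')]) -> unf s (Ch KIn lr) ->
  (forall r', In (a, r') lr -> noncompliant_ct r' s') -> noncompliant_ct s t.
Proof.
  intros Ht Hs Hall. destruct (classic (exists r', In (a, r') lr)) as [[r' Hr']|Hno].
  - destruct (trans_branch _ _ _ _ _ Hs ltac:(discriminate) Hr') as [a1 [Hc Ha1]].
    eapply noncompliant_rollback.
    + apply rt_step, st_ct.
      eapply st_comm; [| | exact Hc | exact (tr_unary [] t KUOut a s' Ht)]; discriminate.
    + now apply Hall.
    + destruct Ha1 as [-> | ->]; [apply noncompliant_client_o|].
      eapply noncompliant_server_o, unf_refl.
  - eapply noncompliant_no_common_name; eauto using tau_free_unary; [left; discriminate|].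
    intros b r1 s1 Hb [E|[]]. injection E as <- <-. eauto.
Qed.

Lemma noncompliant_internal_server s t lr ls a s' :
  unf t (Ch KUOut ls) -> In (a, s') ls -> unf s (Ch KIn lr) ->
  (forall r', In (a, r') lr -> noncompliant_ct r' s') -> noncompliant_ct s t.
Proof.
  intros Ht Hin Hs Hall. destruct (le_lt_dec 2 (length ls)).
  - eapply noncompliant_step; [apply st_ct, st_tau_r; eapply tr_tau; eauto|].
    eapply noncompliant_unary_internal_server; eauto. constructor.
  - destruct ls as [|p [|q rest]]; simpl in *; [contradiction | | lia].
    destruct Hin as [-> | []]. eapply noncompliant_unary_internal_server; eauto.
Qed.

(** * Derivations *)

Lemma derives_retractable G r s kr lr ks ls : opposite_retractable kr ks ->
  unf r (Ch kr lr) -> unf s (Ch ks ls) -> ~ noncompliant_ct r s ->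
  (forall a r' s', In (a, r') lr -> In (a, s') ls -> ~ noncompliant_ct r' s' ->
     derives ((Ch kr lr, Ch ks ls) :: G) r' s') ->
  derives G (Ch kr lr) (Ch ks ls).
Proof.
  intros Hk Hr Hs Hnc IH.
  destruct (classic (exists a r' s', In (a, r') lr /\ In (a, s') ls /\ ~ noncompliant_ct r' s'))
    as [[a [r' [s' [Ha [Hb Hn]]]]]|Hno]; [eapply d_pp; eauto|].
  exfalso. apply Hnc. apply (noncompliant_retractable (length lr) lr ls r s kr ks); auto.
  intros a r' s' Ha Hb. apply NNPP. intros Hn. apply Hno. now exists a, r', s'.
Qed.

Lemma derives_choices G r s kr lr ks ls :
  unf r (Ch kr lr) -> unf s (Ch ks ls) -> ~ noncompliant_ct r s ->
  (forall a r' s', In (a, r') lr -> In (a, s') ls -> ~ noncompliant_ct r' s' ->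
     derives ((Ch kr lr, Ch ks ls) :: G) r' s') ->
  derives G (Ch kr lr) (Ch ks ls).
Proof.
  intros Hr Hs Hnc IH. destruct kr, ks;
    try (exfalso; apply Hnc; eapply noncompliant_same_polarity; eauto; now split);
    try (eapply derives_retractable; eauto; first [now left | now right]).
  - apply d_po. intros a s' Hs'.
    destruct (classic (exists r', In (a, r') lr /\ ~ noncompliant_ct r' s'))
      as [[r' [Hr' Hn]]|Hno]; [eauto|].
    exfalso. apply Hnc. eapply noncompliant_internal_server; eauto.
    intros r' Hr'. apply NNPP. intros Hn. apply Hno. now exists r'.
  - apply d_op. intros a r' Hr'.
    destruct (classic (exists s', In (a, s') ls /\ ~ noncompliant_ct r' s'))
      as [[s' [Hs' Hn]]|Hno]; [eauto|].
    exfalso. apply Hnc. eapply noncompliant_internal_client; eauto.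
    intros s' Hs'. apply NNPP. intros Hn. apply Hno. now exists s'.
Qed.

Lemma filter_length_mono {A} (f g : A -> bool) l :
  (forall y, g y = true -> f y = true) -> length (filter g l) <= length (filter f l).
Proof.
  intros Hfg. induction l as [|y l IH]; simpl; auto.
  destruct (g y) eqn:E; [rewrite (Hfg y E) | destruct (f y)]; simpl; lia.
Qed.

Lemma filter_length_lt {A} (f g : A -> bool) l x :
  (forall y, g y = true -> f y = true) -> In x l -> f x = true -> g x = false ->
  length (filter g l) < length (filter f l).
Proof.
  intros Hfg. induction l as [|y l IH]; simpl; [tauto|]. intros [->|H] Hf Hg.
  - rewrite Hf, Hg. pose proof (filter_length_mono f g l Hfg). simpl. lia.
  - specialize (IH H Hf Hg).
    destruct (g y) eqn:E; [rewrite (Hfg y E) | destruct (f y)]; simpl; lia.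
Qed.

Definition closure_list (r0 : contract) : list contract :=
  map (fun p => msubst (snd p) (fst p)) (positions r0 env0).

Lemma in_closure_list r0 u : in_closure r0 u -> In u (closure_list r0).
Proof. intros [v [e [Hin ->]]]. apply in_map_iff. now exists (v, e). Qed.

Definition unused_pair (G : list (contract * contract)) (p : contract * contract) : bool :=
  if excluded_middle_informative (In p G) then false else true.

Definition unused_pairs (r0 s0 : contract) (G : list (contract * contract)) : nat :=
  length (filter (unused_pair G) (list_prod (closure_list r0) (closure_list s0))).

Lemma unused_pairs_cons r0 s0 G r s : in_closure r0 r -> in_closure s0 s -> ~ In (r, s) G ->
  unused_pairs r0 s0 ((r, s) :: G) < unused_pairs r0 s0 G.
Proof.
  intros Hr Hs HG. unfold unused_pairs, unused_pair.
  eapply filter_length_lt; [| apply in_prod; apply in_closure_list; eauto | |].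
  - intros y. do 2 destruct excluded_middle_informative; simpl in *; tauto.
  - now destruct excluded_middle_informative.
  - destruct excluded_middle_informative as [|Hn]; [|exfalso; apply Hn]; simpl; auto.
Qed.

Lemma derives_of_closure r0 s0 : retractable r0 -> retractable s0 -> forall n G r s,
  unused_pairs r0 s0 G = n -> in_closure r0 r -> in_closure s0 s ->
  ~ noncompliant_ct r s -> derives G r s.
Proof.
  intros Hr0 Hs0 n. induction n as [n IH] using lt_wf_ind. intros G r s <- Hr Hs Hnc.
  destruct (closure_head_normal r0 Hr0 r Hr) as [hr [Hur [->|[kr [lr ->]]]]];
    destruct (closure_unf r0 Hr0 _ _ Hur Hr) as [Cr Fr].
  { eapply d_conv; [exact Cr | apply ceq_refl | apply d_ax]. }
  destruct (closure_head_normal s0 Hs0 s Hs) as [hs [Hus [->|[ks [ls ->]]]]].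
  { exfalso. apply Hnc. eapply noncompliant_server_one; eauto. }
  destruct (closure_unf s0 Hs0 _ _ Hus Hs) as [Cs Fs].
  eapply d_conv; [exact Cr | exact Cs |].
  destruct (classic (In (Ch kr lr, Ch ks ls) G)) as [HG|HG]; [now apply d_hyp|].
  eapply derives_choices; eauto. intros a r' s' Ha Hb Hn.
  eapply IH; [apply unused_pairs_cons; eauto | reflexivity | ..]; eauto using closure_branch.
Qed.

Theorem theorem3 : forall rho sigma : contract,
  retractable rho -> retractable sigma ->
  compliant rho sigma -> derives [] rho sigma.
Proof.
  intros rho sigma Hrho Hsigma Hc.
  eapply derives_of_closure; [exact Hrho | exact Hsigma | reflexivity | | |].
  - now apply closure_self.
  - now apply closure_self.
  - exact (compliant_h_noncompliant _ _ Hc).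
Qed.
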